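(* Consider the hierarchical Gaussian $K$-armed bandit and the algorithm HierTS described in the context, and let $\sigma_{0,\max} = \max_{i \in \mathcal{V}} \sigma_{0,i}$. Then the inequality $c\, \hat{\sigma}_{t,i}^{-2} \geq \hat{\sigma}_{t+1,i}^{-2}$ holds for every node $i \in \mathcal{V}$ and every round $t$ with $c = 1 + \sigma_{0,\max}^2/\sigma^2$. Moreover, if $\sigma \geq \sigma_{0,\max}$, it holds with $c = 2$.
   Context: Tree and model. Let $\mathcal{T}$ be a rooted tree with node set $\mathcal{V}$, root labeled $1$, in which every internal node has at least $2$ children. For a node $i \neq 1$, $\mathsf{pa}(i)$ is its parent; $\mathsf{ch}(i)$ is the set of children of $i$. The leaves form the action set $\mathcal{A}$, $|\mathcal{A}| = K$. Node parameters $\theta_{*, i} \in \mathbb{R}$ are generated as $\theta_{*, 1} \sim \mathcal{N}(\mu_1, \sigma_{0,1}^2)$ and, for $i \neq 1$, $\theta_{*, i} \mid \theta_{*, \mathsf{pa}(i)} \sim \mathcal{N}(\theta_{*, \mathsf{pa}(i)}, \sigma_{0,i}^2)$, with known $\mu_1$ and $\sigma_{0,i} > 0$. In each round $t$ the agent takes $A_t \in \mathcal{A}$ and observes $Y_t \sim \mathcal{N}(\theta_{*, A_t}, \sigma^2)$ (independent noise, known $\sigma > 0$). The history is $H_t = (A_\ell, Y_\ell)_{\ell < t}$. HierTS samples $\Theta_t$ exactly from the posterior of $(\theta_{*,i})_{i \in \mathcal{V}}$ given $H_t$ and takes $A_t = \arg\max_{a \in \mathcal{A}} \theta_{t,a}$.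 Conditional posterior variances. For a node $i \neq 1$, $\hat{\sigma}_{t,i}^2$ is the variance of $\theta_{*, i}$ conditioned on $H_t$ and on $\theta_{*, \mathsf{pa}(i)}$ (it does not depend on the parent's value); for the root, $\hat{\sigma}_{t,1}^2 = \mathrm{Var}(\theta_{*,1} \mid H_t)$. Explicitly, with $\mathcal{S}_{t,a} = \{\ell < t : A_\ell = a\}$: for an action node $a$, $\hat{\sigma}_{t,a}^{-2} = \sigma_{0,a}^{-2} + |\mathcal{S}_{t,a}| \sigma^{-2}$; for a non-action node $i$, $\hat{\sigma}_{t,i}^{-2} = \sigma_{0,i}^{-2} + \sum_{j \in \mathsf{ch}(i)} \tilde{\sigma}_{t,j}^{-2}$, where recursively $\tilde{\sigma}_{t,j}^{2} = \sigma_{0,j}^2 + \sigma^2/|\mathcal{S}_{t,j}|$ for an action node $j$ (with $\tilde{\sigma}_{t,j}^{-2} = 0$ if $|\mathcal{S}_{t,j}| = 0$) and $\tilde{\sigma}_{t,j}^{2} = \sigma_{0,j}^2 + \big(\sum_{k \in \mathsf{ch}(j)} \tilde{\sigma}_{t,k}^{-2}\big)^{-1}$ for a non-action node $j$. *)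

From HB Require Import structures.
From mathcomp Require Import all_boot all_order all_algebra.
Set Implicit Arguments. Unset Strict Implicit. Unset Printing Implicit Defensive.
Import Order.TTheory GRing.Theory Num.Theory.
Local Open Scope ring_scope.

Section HierBandit.
Variables (R : realFieldType) (V : finType) (root : V) (pa : V -> V).

Definition ch (i : V) : {set V} := [set j | (j != root) && (pa j == i)].

Definition is_action (i : V) : bool := ch i == set0.

(* rooted tree with root [root]: the root is its own parent (convention),
   every node reaches the root by following parents, and every internal
   node has at least two children. *)
Definition rooted_tree : Prop :=
  pa root = root /\
  (forall j : V, iter #|V| pa j = root) /\
  (forall i : V, ~~ is_action i -> (2 <= #|ch i|)%N).

Variables (sigma0 : V -> R) (sigma : R) (A : nat -> V).

Definition count (t : nat) (a : V) : nat := \sum_(l < t) (A l == a).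

(* tilde sigma_{t,j}^{-2}, computed by structural recursion with fuel;
   an infinite variance (no observation below j) is precision 0. *)
Fixpoint tprec_fuel (fuel : nat) (t : nat) (j : V) : R :=
  match fuel with
  | O => 0
  | S f =>
    if is_action j then
      (if count t j == 0%N then 0
       else (sigma0 j ^+ 2 + sigma ^+ 2 / (count t j)%:R)^-1)
    else
      let s := \sum_(k in ch j) tprec_fuel f t k in
      if s == 0 then 0 else (sigma0 j ^+ 2 + s^-1)^-1
  end.

Definition tprec (t : nat) (j : V) : R := tprec_fuel #|V| t j.

Definition hprec (t : nat) (i : V) : R :=
  if is_action i then (sigma0 i ^+ 2)^-1 + (count t i)%:R / sigma ^+ 2
  else (sigma0 i ^+ 2)^-1 + \sum_(j in ch i) tprec t j.

Definition sigma0_max : R := \big[Num.max/0]_(i : V) sigma0 i.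

End HierBandit.

From HB Require Import structures.
From mathcomp Require Import all_boot all_order all_algebra.
From mathcomp Require Import ring lra.
Import Order.TTheory GRing.Theory Num.Theory.
Set Implicit Arguments. Unset Strict Implicit. Unset Printing Implicit Defensive.

(** The precision passed from a node [j] to its parent is [(s0_j^2 + 1/x)^-1],
    where [x] is the summed precision of the children of [j] (or [n/s^2] for a
    leaf observed [n] times).  The map [x |-> (c + 1/x)^-1 = x/(c x + 1)] is
    nondecreasing and 1-Lipschitz on [0, oo), so one new observation of a leaf
    [a] raises the message of [j] by at most [1/s^2] if [a] lies below [j],
    and not at all otherwise.  As [a] lies below at most one child of any node,
    [hprec_(t+1) i <= hprec_t i + 1/s^2], and
    [1/s^2 = (s0_i^2/s^2) s0_i^-2 <= (s0max^2/s^2) hprec_t i]. *)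

Section LeafHits.
Variables (V : finType) (root : V) (pa : V -> V).

Fixpoint leaf_hits (a : V) (fuel : nat) (j : V) : nat :=
  match fuel with
  | O => 0
  | S f => if is_action root pa j then (a == j : nat)
           else \sum_(k in ch root pa j) leaf_hits a f k
  end.

Lemma leaf_hits_ancestor a f j : 0 < leaf_hits a f j -> exists m, iter m pa a = j.
Proof.
elim: f j => [|f IHf] j //=; case: ifP => _.
  by case: eqP => // <- _; exists 0.
rewrite lt0n sum_nat_eq0 => /forallPn [k]; rewrite negb_imply -lt0n => /andP [].
by rewrite inE => /andP [_ /eqP <-] /IHf [m <-]; exists m.+1; rewrite iterS.
Qed.

Hypothesis tree : rooted_tree root pa.

Lemma iter_pa_root n : iter n pa root = root.
Proof. by case: tree => pa_root _; elim: n => //= n ->. Qed.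

Lemma iter_pa_card n j : #|V| <= n -> iter n pa j = root.
Proof.
case: tree => _ [iter_card _] le_card_n.
by rewrite -(subnK le_card_n) iterD iter_card iter_pa_root.
Qed.

Lemma iter_pa_fixed d j : iter d.+1 pa j = j -> j = root.
Proof.
move=> fix_j; have iter_mul m : iter (d.+1 * m) pa j = j.
  by elim: m => [|m IHm]; rewrite ?muln0 // mulnSr addnC iterD IHm fix_j.
by rewrite -(iter_mul #|V|) iter_pa_card // leq_pmull.
Qed.

Lemma ancestor_child_uniq a j k1 k2 m1 m2 :
  k1 \in ch root pa j -> k2 \in ch root pa j ->
  iter m1 pa a = k1 -> iter m2 pa a = k2 -> k1 = k2.
Proof.
wlog le_m12 : k1 k2 m1 m2 / m1 <= m2.
  move=> wlog_le k1j k2j a_k1 a_k2; case: (leqP m1 m2) => [|/ltnW] le_m.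
    exact: (wlog_le _ _ m1 m2).
  by apply/esym/(wlog_le _ _ m2 m1).
rewrite !inE => /andP [_ /eqP pa_k1] /andP [k2_neq_root /eqP pa_k2] a_k1.
rewrite -(subnK le_m12) iterD a_k1; case: (m2 - m1) => [//|d] k1_k2.
have fix_j : iter d.+1 pa j = j by rewrite iterS -[in X in iter _ _ X]pa_k1 -iterSr k1_k2.
move: k2_neq_root; rewrite -k1_k2 iterSr pa_k1 (iter_pa_fixed fix_j) iter_pa_root.
by rewrite eqxx.
Qed.

Lemma leaf_hits_le1 a f j : leaf_hits a f j <= 1.
Proof.
elim: f j => [|f IHf] j //=; case: ifP => _; first by case: (a == j).
case: (boolP [exists k in ch root pa j, 0 < leaf_hits a f k]) => [/exists_inP [k kj hit_k]|].
  rewrite (bigD1 k) //= big1 ?addn0 // => k' /andP [k'j k'_neq_k].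
  apply/eqP; rewrite -leqn0 leqNgt; apply: contra k'_neq_k => hit_k'.
  have [m a_k] := leaf_hits_ancestor hit_k; have [m' a_k'] := leaf_hits_ancestor hit_k'.
  by rewrite (ancestor_child_uniq k'j kj a_k' a_k).
move/exists_inPn => no_hit; rewrite big1 // => k /no_hit.
by rewrite lt0n negbK => /eqP.
Qed.

End LeafHits.

Local Open Scope ring_scope.

Section AddVariance.
Variables (R : realFieldType) (c : R).
Hypothesis c_gt0 : 0 < c.

(* Precision of [X + Z] with [Z] independent of variance [c], when [X] has
   precision [x]; precision [0] encodes infinite variance. *)
Definition prec_add_var (x : R) : R := if x == 0 then 0 else (c + x^-1)^-1.

Lemma scale_add1_gt0 x : 0 <= x -> 0 < c * x + 1.
Proof. by move=> x_ge0; rewrite ltr_wpDl // mulr_ge0 // ltW. Qed.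

Lemma prec_add_varE x : 0 <= x -> prec_add_var x = x / (c * x + 1).
Proof.
move=> x_ge0; rewrite /prec_add_var; case: eqP => [->|/eqP x_neq0]; first by rewrite mul0r.
by field; rewrite x_neq0 lt0r_neq0 ?scale_add1_gt0.
Qed.

Lemma prec_add_var_ge0 x : 0 <= x -> 0 <= prec_add_var x.
Proof. by move=> x_ge0; rewrite prec_add_varE // divr_ge0 // ltW ?scale_add1_gt0. Qed.

Lemma prec_add_var_le x y : 0 <= x -> x <= y -> prec_add_var x <= prec_add_var y.
Proof.
move=> x_ge0 le_xy; have y_ge0 : 0 <= y by apply: le_trans le_xy.
rewrite !prec_add_varE // ler_pdivrMr ?scale_add1_gt0 // mulrAC.
rewrite ler_pdivlMr ?scale_add1_gt0 //.
have c_ge0 := ltW c_gt0; nra.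
Qed.

Lemma prec_add_var_sub_le x y : 0 <= x -> x <= y ->
  prec_add_var y - prec_add_var x <= y - x.
Proof.
move=> x_ge0 le_xy; have y_ge0 : 0 <= y by apply: le_trans le_xy.
have cx1_gt0 := scale_add1_gt0 x_ge0; have cy1_gt0 := scale_add1_gt0 y_ge0.
rewrite !prec_add_varE //.
have -> : y / (c * y + 1) - x / (c * x + 1) = (y - x) / ((c * x + 1) * (c * y + 1)).
  by field; rewrite !lt0r_neq0.
rewrite ler_pdivrMr ?mulr_gt0 // ler_peMr ?subr_ge0 //.
have cx_ge0 : 0 <= c * x by rewrite mulr_ge0 // ltW.
have cy_ge0 : 0 <= c * y by rewrite mulr_ge0 // ltW.
nra.
Qed.

Lemma prec_add_var_step x y d : 0 <= x -> x <= y -> y <= x + d ->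
  prec_add_var x <= prec_add_var y <= prec_add_var x + d.
Proof.
move=> x_ge0 le_xy le_y_xd; rewrite prec_add_var_le //= -lerBlDl.
by rewrite (le_trans (prec_add_var_sub_le _ _)) // lerBlDl.
Qed.

End AddVariance.

Section Precisions.
Variables (R : realFieldType) (V : finType) (root : V) (pa : V -> V).
Variables (sigma0 : V -> R) (sigma : R) (A : nat -> V).
Hypothesis sigma0_gt0 : forall i, 0 < sigma0 i.
Hypothesis sigma_gt0 : 0 < sigma.

Local Notation tprec_fuel := (tprec_fuel root pa sigma0 sigma A).
Local Notation hprec := (hprec root pa sigma0 sigma A).
Local Notation hits := (leaf_hits root pa).

Lemma count_S t j : count A t.+1 j = (count A t j + (A t == j))%N.
Proof. by rewrite /count big_ord_recr. Qed.

Lemma sigma2_gt0 : 0 < sigma ^+ 2.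
Proof. exact: exprn_gt0. Qed.

Lemma sigma02_gt0 i : 0 < sigma0 i ^+ 2.
Proof. exact: exprn_gt0. Qed.

Lemma tprec_fuel_leaf f t j : is_action root pa j ->
  tprec_fuel f.+1 t j = prec_add_var (sigma0 j ^+ 2) ((count A t j)%:R / sigma ^+ 2).
Proof.
move=> /= ->; rewrite /prec_add_var; case: (count A t j) => [|n].
  by rewrite mul0r !eqxx.
by rewrite mulf_eq0 invr_eq0 pnatr_eq0 (gt_eqF sigma2_gt0) invf_div.
Qed.

Lemma tprec_fuel_node f t j : ~~ is_action root pa j ->
  tprec_fuel f.+1 t j = prec_add_var (sigma0 j ^+ 2) (\sum_(k in ch root pa j) tprec_fuel f t k).
Proof. by move=> /= /negPf ->. Qed.

Lemma tprec_fuel_ge0 f t j : 0 <= tprec_fuel f t j.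
Proof.
elim: f j => [|f IHf] j //; have s02_gt0 := sigma02_gt0 j.
case: (boolP (is_action root pa j)) => [leaf_j|node_j].
  by rewrite tprec_fuel_leaf // prec_add_var_ge0 // divr_ge0 // ltW // sigma2_gt0.
by rewrite tprec_fuel_node // prec_add_var_ge0 // sumr_ge0.
Qed.

Lemma tprec_fuel_step f t j :
  tprec_fuel f t j <= tprec_fuel f t.+1 j
  <= tprec_fuel f t j + (hits (A t) f j)%:R / sigma ^+ 2.
Proof.
elim: f j => [|f IHf] j; first by rewrite /= mul0r addr0 lexx.
case: (boolP (is_action root pa j)) => [leaf_j|node_j].
  rewrite !tprec_fuel_leaf // /= leaf_j count_S natrD mulrDl.
  have s2_ge0 := ltW sigma2_gt0.
  by apply: (prec_add_var_step (sigma02_gt0 j)); rewrite ?lerDl ?divr_ge0.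
rewrite !tprec_fuel_node //= (negPf node_j) natr_sum mulr_suml.
apply: (prec_add_var_step (sigma02_gt0 j)).
- by apply: sumr_ge0 => k _; apply: tprec_fuel_ge0.
- by apply: ler_sum => k _; case/andP: (IHf k).
- by rewrite -big_split ler_sum // => k _; case/andP: (IHf k).
Qed.

Lemma hprec_ge_prior t i : (sigma0 i ^+ 2)^-1 <= hprec t i.
Proof.
rewrite /hprec; case: ifP => _; rewrite lerDl.
  by rewrite divr_ge0 // ltW // sigma2_gt0.
by rewrite sumr_ge0 // => j _; apply: tprec_fuel_ge0.
Qed.

Hypothesis tree : rooted_tree root pa.

Lemma hprec_step t i : hprec t.+1 i <= hprec t i + (sigma ^+ 2)^-1.
Proof.
have s2_gt0 := sigma2_gt0.
rewrite /hprec; case: ifP => leaf_i; rewrite -addrA lerD2l.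
  rewrite count_S natrD mulrDl lerD2l.
  by case: (A t == i); rewrite ?mul1r ?mul0r // invr_ge0 ltW.
apply: (@le_trans _ _ (\sum_(j in ch root pa i)
    (tprec root pa sigma0 sigma A t j + (hits (A t) #|V| j)%:R / sigma ^+ 2))).
  by apply: ler_sum => j _; case/andP: (tprec_fuel_step #|V| t j).
rewrite big_split /= lerD2l -mulr_suml -natr_sum.
apply: ler_piMl; first by rewrite invr_ge0 ltW.
have := leaf_hits_le1 tree (A t) #|V|.+1 i; rewrite /= leaf_i.
by rewrite lern1.
Qed.

Lemma sigma0_le_max i : sigma0 i <= sigma0_max sigma0.
Proof. exact: le_bigmax. Qed.

Lemma hprec_succ_le t i :
  hprec t.+1 i <= (1 + sigma0_max sigma0 ^+ 2 / sigma ^+ 2) * hprec t i.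
Proof.
have s2_gt0 := sigma2_gt0; have s02_gt0 := sigma02_gt0 i.
apply: le_trans (hprec_step t i) _; rewrite mulrDl mul1r lerD2l.
rewrite -[leLHS]mul1r -(mulfV (lt0r_neq0 s02_gt0)) mulrAC.
have [s_ge0 s0_ge0] := (ltW s2_gt0, ltW s02_gt0).
apply: ler_pM; rewrite ?divr_ge0 ?invr_ge0 ?hprec_ge_prior //.
rewrite ler_pM2r ?invr_gt0 // lerXn2r ?nnegrE ?sigma0_le_max ?ltW //.
exact: lt_le_trans (sigma0_gt0 i) (sigma0_le_max i).
Qed.

Lemma hprec_succ_le_double t i : sigma0_max sigma0 <= sigma -> hprec t.+1 i <= 2 * hprec t i.
Proof.
move=> max_le_sigma; apply: le_trans (hprec_succ_le t i) _.
have max_ge0 : 0 <= sigma0_max sigma0 := le_trans (ltW (sigma0_gt0 i)) (sigma0_le_max i).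
have hprec_ge0 : 0 <= hprec t i.
  by apply: le_trans (hprec_ge_prior t i); rewrite invr_ge0 ltW ?sigma02_gt0.
rewrite ler_wpM2r // -[2]/(1 + 1) lerD2l ler_pdivrMr ?sigma2_gt0 // mul1r.
by rewrite lerXn2r ?nnegrE // ltW.
Qed.

End Precisions.

Theorem lemma4 (R : realFieldType) (V : finType) (root : V) (pa : V -> V)
  (sigma0 : V -> R) (sigma : R) (A : nat -> V) :
  rooted_tree root pa ->
  (forall i : V, 0 < sigma0 i) ->
  0 < sigma ->
  (forall l : nat, is_action root pa (A l)) ->
  (forall (t : nat) (i : V),
     hprec root pa sigma0 sigma A t.+1 i <=
     (1 + sigma0_max sigma0 ^+ 2 / sigma ^+ 2) * hprec root pa sigma0 sigma A t i) /\
  (sigma0_max sigma0 <= sigma ->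
   forall (t : nat) (i : V),
     hprec root pa sigma0 sigma A t.+1 i <= 2 * hprec root pa sigma0 sigma A t i).
Proof.
(* Counts of internal nodes never enter the precisions: actions need not be leaves. *)
move=> tree sigma0_gt0 sigma_gt0 _.
by split=> [t i | max_le_sigma t i]; [apply: hprec_succ_le | apply: hprec_succ_le_double].
Qed.
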